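(* Let $\psi:[0,2]\to[0,+\infty)$ be a decreasing $C^1$ function with $\psi(2)=0$ and $\psi'(2)<0$. Let $Q:=(\mathbb{R}^3\setminus\{0\})\times(\mathbb{R}^3\setminus\{0\})\times\mathbb{R}^3$ and define $T:Q\to\mathbb{R}^3$ by $$T(x_1,x_2,v)=\begin{cases}\psi\Big(\Big\|\frac{x_1}{\|x_1\|}-\frac{x_2}{\|x_2\|}\Big\|\Big)\,R\Big(\frac{x_2}{\|x_2\|},\frac{x_1}{\|x_1\|}\Big)v, & \text{if } \frac{x_1}{\|x_1\|}+\frac{x_2}{\|x_2\|}\neq0,\\ 0, & \text{if } \frac{x_1}{\|x_1\|}+\frac{x_2}{\|x_2\|}=0.\end{cases}$$ Then $T$ is locally Lipschitz continuous on $Q$.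
   Context: $\|\cdot\|$ is the Euclidean norm on $\mathbb{R}^3$. For column vectors $a,b$ in the unit sphere $\mathbb{S}^2$ with $a\ne-b$, $R(a,b)=I$ if $a=b$, and otherwise $$R(a,b)=\langle a,b\rangle I-ab^T+ba^T+(1-\langle a,b\rangle)\Big(\frac{a\times b}{\|a\times b\|}\Big)\Big(\frac{a\times b}{\|a\times b\|}\Big)^T.$$ *)

From HB Require Import structures.
From mathcomp Require Import all_boot all_order all_algebra.
From mathcomp Require Import all_classical all_reals all_analysis.
Set Implicit Arguments. Unset Strict Implicit. Unset Printing Implicit Defensive.
Import Order.TTheory GRing.Theory Num.Theory.
Import numFieldNormedType.Exports.
Local Open Scope classical_set_scope.
Local Open Scope ring_scope.

Section Defs.
Variable R : realType.

Definition dotv (a b : 'cV[R]_3) : R := \sum_(i < 3) a i 0 * b i 0.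

Definition enorm (a : 'cV[R]_3) : R := Num.sqrt (dotv a a).

Definition crossv (a b : 'cV[R]_3) : 'cV[R]_3 :=
  let a0 := a (inord 0) 0 in let a1 := a (inord 1) 0 in let a2 := a (inord 2) 0 in
  let b0 := b (inord 0) 0 in let b1 := b (inord 1) 0 in let b2 := b (inord 2) 0 in
  \col_(i < 3)
    (if nat_of_ord i == 0%N then a1 * b2 - a2 * b1
     else if nat_of_ord i == 1%N then a2 * b0 - a0 * b2
     else a0 * b1 - a1 * b0).

(* the rotation R(a,b) from the paper (only meaningful for unit a, b, a <> -b) *)
Definition Rrot (a b : 'cV[R]_3) : 'M[R]_3 :=
  if a == b then 1%:M
  else let n := (enorm (crossv a b))^-1 *: crossv a b in
       (dotv a b)%:M - a *m b^T + b *m a^T + (1 - dotv a b) *: (n *m n^T).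

Definition unitv (x : 'cV[R]_3) : 'cV[R]_3 := (enorm x)^-1 *: x.

Definition Tmap (psi : R -> R) (x1 x2 v : 'cV[R]_3) : 'cV[R]_3 :=
  if unitv x1 + unitv x2 != 0 then
    psi (enorm (unitv x1 - unitv x2)) *: (Rrot (unitv x2) (unitv x1) *m v)
  else 0.

Definition dist9 (x1 x2 v y1 y2 w : 'cV[R]_3) : R :=
  Num.sqrt (dotv (x1 - y1) (x1 - y1) + dotv (x2 - y2) (x2 - y2) + dotv (v - w) (v - w)).

(* psi is C^1 on the closed interval [0,2] (one-sided derivatives at the
   endpoints), with derivative dpsi *)
Definition C1_on_02_with (psi dpsi : R -> R) : Prop :=
  (forall x, x \in `[0, 2] ->
     (fun y => (psi y - psi x) / (y - x)) @ within [set y | y \in `[0, 2]] x^'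
       --> dpsi x) /\
  {within [set y | y \in `[0, 2]], continuous dpsi}.

Definition locally_lipschitz_on_Q
    (F : 'cV[R]_3 -> 'cV[R]_3 -> 'cV[R]_3 -> 'cV[R]_3) : Prop :=
  forall x1 x2 v : 'cV[R]_3, x1 != 0 -> x2 != 0 ->
  exists r : R, 0 < r /\ exists L : R,
    forall y1 y2 w z1 z2 u : 'cV[R]_3,
      y1 != 0 -> y2 != 0 -> z1 != 0 -> z2 != 0 ->
      dist9 y1 y2 w x1 x2 v < r -> dist9 z1 z2 u x1 x2 v < r ->
      enorm (F y1 y2 w - F z1 z2 u) <= L * dist9 y1 y2 w z1 z2 u.

End Defs.

(* For unit vectors a, b with a + b <> 0 the rotation is
     R(a,b) v = (a.b) v - (b.v) a + (a.v) b + 2 (u.v) u,   u = (a x b) / |a + b|,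
   with |u| <= 1. Every term is Lipschitz in (a, b, v) for bounded v except u,
   which only satisfies |a + b| |u - u'| <= 2 (|a - a'| + |b - b'|). The factor
   psi(|b - a|) makes up for this: psi is Lipschitz (C^1 on [0, 2]) and vanishes
   at 2, so |psi(|b - a|)| <= M (2 - |b - a|) <= M |a + b|; the same bound shows
   that T is given by this formula also where a + b = 0. Composing with the map
   x |-> x / |x|, Lipschitz away from 0, gives the theorem. *)

From HB Require Import structures.
From mathcomp Require Import all_boot all_order all_algebra.
From mathcomp Require Import all_classical all_reals all_analysis.
From mathcomp Require Import lra ring.
Import Order.TTheory GRing.Theory Num.Theory.
Import numFieldNormedType.Exports.
Local Open Scope ring_scope.
Set Implicit Arguments. Unset Strict Implicit. Unset Printing Implicit Defensive.

Section Euclid3.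
Variable R : realType.
Implicit Types (a b v x y z : 'cV[R]_3) (k : R).

Local Notation i0 := (inord 0 : 'I_3).
Local Notation i1 := (inord 1 : 'I_3).
Local Notation i2 := (inord 2 : 'I_3).

Lemma sum3 (F : 'I_3 -> R) : \sum_(i < 3) F i = F i0 + F i1 + F i2.
Proof.
rewrite !big_ord_recl big_ord0 addr0 addrA.
by congr (F _ + F _ + F _); apply/val_inj; rewrite /= inordK.
Qed.

Lemma col3_eq a b :
  a i0 0 = b i0 0 -> a i1 0 = b i1 0 -> a i2 0 = b i2 0 -> a = b.
Proof.
move=> e0 e1 e2; apply/matrixP => i j; rewrite (ord1 j).
have -> : i = inord i by apply/val_inj; rewrite /= inordK.
by case: i => [[|[|[|//]]] ?].
Qed.

Lemma dotvE a b : dotv a b = a i0 0 * b i0 0 + a i1 0 * b i1 0 + a i2 0 * b i2 0.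
Proof. by rewrite /dotv sum3. Qed.

Lemma crossvE a b :
  [/\ crossv a b i0 0 = a i1 0 * b i2 0 - a i2 0 * b i1 0,
      crossv a b i1 0 = a i2 0 * b i0 0 - a i0 0 * b i2 0 &
      crossv a b i2 0 = a i0 0 * b i1 0 - a i1 0 * b i0 0].
Proof. by rewrite /crossv !mxE !inordK. Qed.

Lemma dotvZl k a b : dotv (k *: a) b = k * dotv a b.
Proof. rewrite !dotvE !mxE; ring. Qed.

Lemma dotv_sqrD a b : dotv (a + b) (a + b) = dotv a a + 2 * dotv a b + dotv b b.
Proof. rewrite !dotvE !mxE; ring. Qed.

Lemma dotv_sqrB a b : dotv (a - b) (a - b) = dotv a a - 2 * dotv a b + dotv b b.
Proof. rewrite !dotvE !mxE; ring. Qed.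

Lemma dotv_ge0 a : 0 <= dotv a a.
Proof. rewrite dotvE; nra. Qed.

Lemma lagrange_identity a b :
  dotv (crossv a b) (crossv a b) = dotv a a * dotv b b - dotv a b ^+ 2.
Proof. case: (crossvE a b) => c0 c1 c2; rewrite !dotvE c0 c1 c2; ring. Qed.

Lemma crossvv a : crossv a a = 0.
Proof. apply: col3_eq; rewrite /crossv !mxE !inordK //=; ring. Qed.

Lemma crossvBB a b a' b' :
  crossv a b - crossv a' b' = crossv (a - a') b + crossv a' (b - b').
Proof. apply: col3_eq; rewrite /crossv !mxE !inordK //=; ring. Qed.

Lemma enorm_ge0 a : 0 <= enorm a.
Proof. exact: sqrtr_ge0. Qed.

Lemma sqr_enorm a : enorm a ^+ 2 = dotv a a.
Proof. by rewrite /enorm sqr_sqrtr ?dotv_ge0. Qed.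

Lemma enorm0 : enorm (0 : 'cV[R]_3) = 0.
Proof. by rewrite /enorm dotvE !mxE !mul0r !addr0 sqrtr0. Qed.

Lemma enorm_eq0 a : (enorm a == 0) = (a == 0).
Proof.
apply/idP/eqP => [|->]; last by rewrite enorm0.
rewrite sqrtr_eq0 dotvE => sum_le0.
have sqr_eq0 (t : R) : t ^+ 2 <= 0 -> t = 0.
  by move=> t_le0; apply/eqP; rewrite -sqrf_eq0 eq_le t_le0 sqr_ge0.
by apply: col3_eq; rewrite mxE; apply: sqr_eq0; nra.
Qed.

Lemma enorm_gt0 a : a != 0 -> 0 < enorm a.
Proof. by move=> a_neq0; rewrite lt_def enorm_eq0 a_neq0 enorm_ge0. Qed.

Lemma enormZ k a : enorm (k *: a) = `|k| * enorm a.
Proof.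
rewrite /enorm.
have -> : dotv (k *: a) (k *: a) = k ^+ 2 * dotv a a by rewrite !dotvE !mxE; ring.
by rewrite sqrtrM ?sqr_ge0 // sqrtr_sqr.
Qed.

Lemma enormN a : enorm (- a) = enorm a.
Proof. by rewrite -scaleN1r enormZ normrN1 mul1r. Qed.

Lemma enorm_distC a b : enorm (a - b) = enorm (b - a).
Proof. by rewrite -enormN opprB. Qed.

Lemma normr_dotv_le a b : `|dotv a b| <= enorm a * enorm b.
Proof.
rewrite /enorm -sqrtrM ?dotv_ge0 // -sqrtr_sqr; apply: ler_wsqrtr.
by have := dotv_ge0 (crossv a b); rewrite lagrange_identity subr_ge0.
Qed.

Lemma enorm_crossv_le a b : enorm (crossv a b) <= enorm a * enorm b.
Proof.
rewrite /enorm -sqrtrM ?dotv_ge0 //; apply: ler_wsqrtr.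
by rewrite lagrange_identity lerBlDr lerDl sqr_ge0.
Qed.

Lemma enormD a b : enorm (a + b) <= enorm a + enorm b.
Proof.
rewrite -(ler_pXn2r (_ : 0 < 2)%N) ?nnegrE ?addr_ge0 ?enorm_ge0 //.
rewrite sqr_enorm dotv_sqrD sqrrD !sqr_enorm lerD2r lerD2l.
by have := normr_dotv_le a b; have := ler_norm (dotv a b); lra.
Qed.

Lemma enormB_le a b : enorm (a - b) <= enorm a + enorm b.
Proof. by rewrite -(enormN b) enormD. Qed.

Lemma ler_dist_enorm a b : `|enorm a - enorm b| <= enorm (a - b).
Proof.
rewrite ler_norml; apply/andP; split.
  by have := enormD (b - a) a; rewrite subrK enorm_distC; lra.
by have := enormD (a - b) b; rewrite subrK; lra.
Qed.

Lemma enorm_dotvZ_le x y z : enorm (dotv x y *: z) <= enorm x * enorm y * enorm z.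
Proof. by rewrite enormZ ler_wpM2r ?enorm_ge0 ?normr_dotv_le. Qed.

Lemma enorm_dotvZ_sub_le x y z x' y' z' (X Y Z : R) :
    enorm x' <= X -> enorm y <= Y -> enorm y' <= Y -> enorm z <= Z ->
  enorm (dotv x y *: z - dotv x' y' *: z') <=
  enorm (x - x') * Y * Z + X * enorm (y - y') * Z + X * Y * enorm (z - z').
Proof.
move=> x'_le y_le y'_le z_le.
have ler_pM3 (p q r p' q' r' : R) : 0 <= p -> 0 <= q -> 0 <= r ->
    p <= p' -> q <= q' -> r <= r' -> p * q * r <= p' * q' * r'.
  by move=> *; rewrite ler_pM ?mulr_ge0 ?ler_pM.
have -> : dotv x y *: z - dotv x' y' *: z' =
    dotv (x - x') y *: z + dotv x' (y - y') *: z + dotv x' y' *: (z - z').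
  by apply: col3_eq; rewrite !dotvE !mxE; ring.
apply: le_trans (enormD _ _) _; apply: lerD; first apply: le_trans (enormD _ _) _.
  by apply: lerD; apply: le_trans (enorm_dotvZ_le _ _ _) _; rewrite ler_pM3 ?enorm_ge0.
by apply: le_trans (enorm_dotvZ_le _ _ _) _; rewrite ler_pM3 ?enorm_ge0.
Qed.

Lemma enorm_sum4_le a b x y :
  enorm (a - b + x + y) <= enorm a + enorm b + enorm x + enorm y.
Proof.
have := enormD (a - b + x) y; have := enormD (a - b) x; have := enormB_le a b.
lra.
Qed.

End Euclid3.

Section UnitVectors.
Variable R : realType.
Implicit Types x y : 'cV[R]_3.

Lemma enorm_unitv x : x != 0 -> enorm (unitv x) = 1.
Proof.
move=> x_neq0; rewrite /unitv enormZ ger0_norm ?invr_ge0 ?enorm_ge0 //.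
by rewrite mulVf // enorm_eq0.
Qed.

Lemma unitv_lipschitz x y : x != 0 -> y != 0 ->
  enorm (unitv x - unitv y) <= 2 * enorm (x - y) / enorm y.
Proof.
move=> /enorm_gt0 x_gt0 /enorm_gt0 y_gt0.
have -> : unitv x - unitv y =
    (enorm y)^-1 *: ((x - y) + ((enorm y - enorm x) / enorm x) *: x).
  by apply: col3_eq; rewrite !mxE; field; rewrite (gt_eqF x_gt0) (gt_eqF y_gt0).
rewrite enormZ ger0_norm ?invr_ge0 ?enorm_ge0 // mulrC ler_pM2r ?invr_gt0 //.
apply: le_trans (enormD _ _) _.
rewrite enormZ normrM normfV (ger0_norm (enorm_ge0 x)) mulfVK ?gt_eqF //.
by have := ler_dist_enorm y x; rewrite enorm_distC; lra.
Qed.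

End UnitVectors.

Section Rotation.
Variable R : realType.
Implicit Types a b v : 'cV[R]_3.

Lemma trmx_mulmx a v : a^T *m v = (dotv a v)%:M.
Proof.
apply/matrixP => i j; rewrite (ord1 i) (ord1 j) !mxE /dotv.
by apply: eq_bigr => k _; rewrite !mxE.
Qed.

Lemma outer_mulmx a b v : a *m b^T *m v = dotv b v *: a.
Proof. by rewrite -mulmxA trmx_mulmx mul_mx_scalar. Qed.

Lemma Rrot_mulmx a b v : a != b ->
  Rrot a b *m v = dotv a b *: v - dotv b v *: a + dotv a v *: b +
    ((1 - dotv a b) / enorm (crossv a b) ^+ 2 * dotv (crossv a b) v) *: crossv a b.
Proof.
move=> a_neq_b; rewrite /Rrot (negbTE a_neq_b).
rewrite !mulmxDl mulNmx mul_scalar_mx -!scalemxAl !outer_mulmx.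
by rewrite dotvZl !scalerA expr2 invfM; congr (_ + _ *: _); ring.
Qed.

Definition rot_axis a b := (enorm (a + b))^-1 *: crossv a b.

(* For unit [a], [b] with [a + b != 0] one has
   [(1 - a.b) / |a x b|^2 = 2 / |a + b|^2], so [Rrot a b *m v] takes this form. *)
Definition rotv a b v :=
  dotv a b *: v - dotv b v *: a + dotv a v *: b + dotv (rot_axis a b) v *: (2 *: rot_axis a b).

Section UnitPair.
Variables a b : 'cV[R]_3.
Hypotheses (a_unit : enorm a = 1) (b_unit : enorm b = 1).

Let dotvaa : dotv a a = 1. Proof. by rewrite -sqr_enorm a_unit expr1n. Qed.
Let dotvbb : dotv b b = 1. Proof. by rewrite -sqr_enorm b_unit expr1n. Qed.

Lemma sqr_enorm_add_unit : enorm (a + b) ^+ 2 = 2 * (1 + dotv a b).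
Proof. by rewrite sqr_enorm dotv_sqrD dotvaa dotvbb; ring. Qed.

Lemma sqr_enorm_sub_unit : enorm (a - b) ^+ 2 = 2 * (1 - dotv a b).
Proof. by rewrite sqr_enorm dotv_sqrB dotvaa dotvbb; ring. Qed.

Lemma sqr_enorm_crossv_unit : enorm (crossv a b) ^+ 2 = (1 - dotv a b) * (1 + dotv a b).
Proof. by rewrite sqr_enorm lagrange_identity dotvaa dotvbb; ring. Qed.

Lemma enorm_crossv_le_add : enorm (crossv a b) <= enorm (a + b).
Proof.
rewrite -(ler_pXn2r (_ : 0 < 2)%N) ?nnegrE ?enorm_ge0 //.
rewrite sqr_enorm_crossv_unit sqr_enorm_add_unit.
by have := sqr_ge0 (1 + dotv a b); nra.
Qed.

Lemma enorm_rot_axis_le1 : enorm (rot_axis a b) <= 1.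
Proof.
rewrite /rot_axis enormZ ger0_norm ?invr_ge0 ?enorm_ge0 //.
have [->|s_neq0] := eqVneq (enorm (a + b)) 0; first by rewrite invr0 mul0r.
by rewrite mulrC ler_pdivrMr ?mul1r ?enorm_crossv_le_add // lt_def s_neq0 enorm_ge0.
Qed.

Lemma crossv_rot_axis : crossv a b = enorm (a + b) *: rot_axis a b.
Proof.
rewrite /rot_axis scalerA.
have [s_eq0|s_neq0] := eqVneq (enorm (a + b)) 0; last by rewrite mulfV // scale1r.
have := enorm_crossv_le_add; rewrite s_eq0 mul0r scale0r => n_le0.
by apply/eqP; rewrite -enorm_eq0 eq_le n_le0 enorm_ge0.
Qed.

Lemma Rrot_rotv v : a + b != 0 -> Rrot a b *m v = rotv a b v.
Proof.
move=> ab_neq0; rewrite /rotv.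
have [<-|a_neq_b] := eqVneq a b.
  have -> : rot_axis a a = 0 by rewrite /rot_axis crossvv scaler0.
  rewrite /Rrot eqxx mul1mx dotvaa scale1r subrK.
  by rewrite dotvE !mxE !mul0r !addr0 scale0r addr0.
have c_neq1 : 1 - dotv a b != 0.
  apply: contra a_neq_b => /eqP c_eq1.
  by rewrite -subr_eq0 -enorm_eq0 -sqrf_eq0 sqr_enorm_sub_unit c_eq1 mulr0.
have c_neqN1 : 1 + dotv a b != 0.
  apply: contra ab_neq0 => /eqP c_eqN1.
  by rewrite -enorm_eq0 -sqrf_eq0 sqr_enorm_add_unit c_eqN1 mulr0.
rewrite Rrot_mulmx // /rot_axis dotvZl !scalerA; congr (_ + _ *: _).
rewrite sqr_enorm_crossv_unit.
have -> : (enorm (a + b))^-1 * dotv (crossv a b) v * (2 * (enorm (a + b))^-1) =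
    2 / enorm (a + b) ^+ 2 * dotv (crossv a b) v by rewrite expr2 invfM; ring.
by rewrite sqr_enorm_add_unit; field; rewrite c_neq1 c_neqN1.
Qed.

End UnitPair.

Lemma enorm_rot_axis_sub_le a b a' b' :
    enorm a = 1 -> enorm b = 1 -> enorm a' = 1 -> enorm b' = 1 ->
  enorm (a + b) * enorm (rot_axis a b - rot_axis a' b') <=
  2 * (enorm (a - a') + enorm (b - b')).
Proof.
move=> a_unit b_unit a'_unit b'_unit.
rewrite -{1}(ger0_norm (enorm_ge0 (a + b))) -enormZ.
have -> : enorm (a + b) *: (rot_axis a b - rot_axis a' b') =
    crossv a b - crossv a' b' + (enorm (a' + b') - enorm (a + b)) *: rot_axis a' b'.
  rewrite (crossv_rot_axis a_unit b_unit) (crossv_rot_axis a'_unit b'_unit).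
  by apply: col3_eq; rewrite !mxE; ring.
apply: le_trans (enormD _ _) _; rewrite crossvBB enormZ.
have cross_le : enorm (crossv (a - a') b + crossv a' (b - b')) <= enorm (a - a') + enorm (b - b').
  apply: le_trans (enormD _ _) _.
  have := enorm_crossv_le (a - a') b; have := enorm_crossv_le a' (b - b').
  by rewrite b_unit a'_unit mulr1 mul1r; lra.
have add_le : `|enorm (a' + b') - enorm (a + b)| <= enorm (a - a') + enorm (b - b').
  apply: le_trans (ler_dist_enorm _ _) _; rewrite enorm_distC.
  have -> : a + b - (a' + b') = (a - a') + (b - b') by rewrite addrACA opprD.
  exact: enormD.
have := enorm_rot_axis_le1 a'_unit b'_unit; have := enorm_ge0 (rot_axis a' b').
have := normr_ge0 (enorm (a' + b') - enorm (a + b)); nra.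
Qed.

Lemma enorm_rotv_sub_le a b v a' b' v' (V : R) :
    enorm a = 1 -> enorm b = 1 -> enorm a' = 1 -> enorm b' = 1 ->
    enorm v <= V -> enorm v' <= V ->
  enorm (rotv a b v - rotv a' b' v') <=
  5 * enorm (v - v') + 3 * V * (enorm (a - a') + enorm (b - b'))
  + 4 * V * enorm (rot_axis a b - rot_axis a' b').
Proof.
move=> a_unit b_unit a'_unit b'_unit v_le v'_le.
have [u_le1 u'_le1] := (enorm_rot_axis_le1 a_unit b_unit, enorm_rot_axis_le1 a'_unit b'_unit).
set u := rot_axis a b in u_le1 *; set u' := rot_axis a' b' in u'_le1 *.
have u2_le2 : enorm (2 *: u) <= 2 by rewrite enormZ ger0_norm //; lra.
have -> : rotv a b v - rotv a' b' v' =
    (dotv a b *: v - dotv a' b' *: v') - (dotv b v *: a - dotv b' v' *: a')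
    + (dotv a v *: b - dotv a' v' *: b') + (dotv u v *: (2 *: u) - dotv u' v' *: (2 *: u')).
  by apply: col3_eq; rewrite !mxE; ring.
apply: le_trans (enorm_sum4_le _ _ _ _) _.
have unit_le1 (c : 'cV[R]_3) : enorm c = 1 -> enorm c <= 1 by move->.
have := @enorm_dotvZ_sub_le _ a b v a' b' v' _ _ _
  (unit_le1 _ a'_unit) (unit_le1 _ b_unit) (unit_le1 _ b'_unit) v_le.
have := @enorm_dotvZ_sub_le _ b v a b' v' a' _ _ _
  (unit_le1 _ b'_unit) v_le v'_le (unit_le1 _ a_unit).
have := @enorm_dotvZ_sub_le _ a v b a' v' b' _ _ _
  (unit_le1 _ a'_unit) v_le v'_le (unit_le1 _ b_unit).
have := @enorm_dotvZ_sub_le _ u v (2 *: u) u' v' (2 *: u') _ _ _ u'_le1 v_le v'_le u2_le2.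
rewrite -scalerBr enormZ ger0_norm //.
lra.
Qed.

Lemma rotv0 a b : rotv a b 0 = 0.
Proof. by apply: col3_eq; rewrite /rotv !dotvE !mxE; ring. Qed.

Lemma enorm_rotv_le a b v : enorm a = 1 -> enorm b = 1 -> enorm (rotv a b v) <= 5 * enorm v.
Proof.
move=> a_unit b_unit.
have enorm0_le : enorm (0 : 'cV[R]_3) <= enorm v by rewrite enorm0 enorm_ge0.
have := enorm_rotv_sub_le a_unit b_unit a_unit b_unit (lexx (enorm v)) enorm0_le.
by rewrite !subrr rotv0 !subr0 enorm0; lra.
Qed.

End Rotation.

Section Dist9.
Variable R : realType.

Lemma enorm_le_dist9 (x1 x2 v y1 y2 w : 'cV[R]_3) :
  [/\ enorm (x1 - y1) <= dist9 x1 x2 v y1 y2 w, enorm (x2 - y2) <= dist9 x1 x2 v y1 y2 w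
    & enorm (v - w) <= dist9 x1 x2 v y1 y2 w].
Proof.
have := dotv_ge0 (x1 - y1); have := dotv_ge0 (x2 - y2); have := dotv_ge0 (v - w).
by split; apply: ler_wsqrtr; lra.
Qed.

Lemma dist9_lt_bounds (r : R) (y1 y2 w x1 x2 v : 'cV[R]_3) : dist9 y1 y2 w x1 x2 v < r ->
  [/\ enorm x1 - r <= enorm y1, enorm x2 - r <= enorm y2 & enorm w <= enorm v + r].
Proof.
have [d1_le d2_le dv_le] := enorm_le_dist9 y1 y2 w x1 x2 v.
have := ler_dist_enorm y1 x1; have := ler_dist_enorm y2 x2; have := ler_dist_enorm w v.
by rewrite !ler_norml => /andP[? ?] /andP[? ?] /andP[? ?]; split; lra.
Qed.

End Dist9.

Section RealDerivative.
Local Open Scope classical_set_scope.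
Variable R : realType.
Implicit Types (f : R -> R) (A : set R) (x l : R).

Lemma quotient_cvg_continuous f A x l :
  (fun y => (f y - f x) / (y - x)) @ within A x^' --> l ->
  f @ within A (nbhs x) --> f x.
Proof.
move/cvgrPdist_lt => /(_ 1 ltr01); rewrite near_withinE => /nbhs_normP[d d_gt0 quot_near].
apply/cvgrPdist_lt => e e_gt0; rewrite near_withinE; apply/nbhs_normP.
have l1_gt0 : 0 < `|l| + 1 by rewrite ltr_pwDr.
exists (Num.min d (e / (`|l| + 1))); first by rewrite /= lt_min d_gt0 divr_gt0.
move=> y /=; rewrite lt_min => /andP[y_near y_close] Ay.
have [->|y_neq_x] := eqVneq y x; first by rewrite subrr normr0.
have quot_le : `|(f y - f x) / (y - x)| <= `|l| + 1.
  have := quot_near y y_near y_neq_x Ay.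
  by have := ler_distD l ((f y - f x) / (y - x)) 0; rewrite !subr0 distrC; lra.
have -> : f x - f y = - ((f y - f x) / (y - x) * (y - x)).
  by rewrite divfK ?subr_eq0 // opprB.
rewrite normrN normrM.
apply: le_lt_trans (ler_wpM2r (normr_ge0 _) quot_le) _.
by rewrite mulrC -ltr_pdivlMr // distrC.
Qed.

Lemma quotient_cvg_is_derive f A x l :
  (fun y => (f y - f x) / (y - x)) @ within A x^' --> l -> nbhs x A ->
  is_derive x 1 f l.
Proof.
move/cvgrPdist_lt => quot_cvg /nbhs_normP[d0 d0_gt0 A_near].
suff quot_cvg0 : (fun h : R => h^-1 *: ((f \o shift x) (h *: 1) - f x)) @ 0^' --> l.
  by split; [apply/cvg_ex; exists l | exact: cvg_lim].
apply/cvgrPdist_lt => e e_gt0.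
have := quot_cvg e e_gt0; rewrite near_withinE => /nbhs_normP[d d_gt0 quot_near].
rewrite near_withinE; apply/nbhs_normP.
exists (Num.min d d0); first by rewrite /= lt_min d_gt0 d0_gt0.
move=> h /=; rewrite lt_min sub0r normrN => /andP[h_lt_d h_lt_d0] h_neq0.
have dist_h : `|x - (h + x)| = `|h| by rewrite opprD addrCA subrr addr0 normrN.
have := quot_near (h + x); rewrite /ball_ /= dist_h => /(_ h_lt_d).
rewrite -subr_eq0 addrK => /(_ h_neq0 (A_near _ _)); rewrite /= dist_h => /(_ h_lt_d0).
by rewrite /shift /= [h%:A]mulr1 mulrC.
Qed.

Lemma derive_bounded_lipschitz (f df : R -> R) (a b K : R) :
    (forall x, x \in `]a, b[%R -> is_derive x 1 f (df x)) ->
    {within `[a, b], continuous f} -> {in `[a, b]%R, forall x, `|df x| <= K} ->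
  {in `[a, b]%R &, forall x y, `|f x - f y| <= K * `|x - y|}.
Proof.
move=> f_derive f_cont df_le x y x_ab y_ab.
wlog le_xy : x y x_ab y_ab / x <= y.
  move=> lip_le; have [/lip_le|/ltW/lip_le] := leP x y; first exact.
  by rewrite distrC (distrC x); apply.
have sub_cc : `[x, y] `<=` `[a, b] by apply: subset_itv; rewrite bnd_simp ?(itvP x_ab) ?(itvP y_ab).
have sub_oo : `]x, y[ `<=` `]a, b[ by apply: subset_itv; rewrite bnd_simp ?(itvP x_ab) ?(itvP y_ab).
have [c c_xy f_mvt] := MVT_segment le_xy (fun z z_xy => f_derive z (sub_oo z z_xy))
  (continuous_subspaceW sub_cc f_cont).
rewrite distrC f_mvt normrM distrC.
by rewrite ler_wpM2r // df_le //; exact: sub_cc.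
Qed.

Lemma C1_on_02_lipschitz (psi dpsi : R -> R) : C1_on_02_with psi dpsi ->
  exists2 M, 0 <= M & {in `[0, 2]%R &, forall x y, `|psi x - psi y| <= M * `|x - y|}.
Proof.
move=> [psi_quot dpsi_cont].
have psi_cont : {within `[0, 2], continuous psi}.
  by apply/subspace_continuousP => x x02; apply: quotient_cvg_continuous (psi_quot x _).
have norm_dpsi_cont : {within `[0, 2], continuous (fun x => `|dpsi x|)}.
  by move=> x; apply: continuous_comp (dpsi_cont x) _; exact: norm_continuous.
have [c _ dpsi_le] := EVT_max (ler0n _ 2) norm_dpsi_cont.
exists `|dpsi c|; first exact: normr_ge0.
apply: derive_bounded_lipschitz psi_cont dpsi_le => x x02.
have x02' : x \in `[0, 2]%R by rewrite in_itv /= !ltW ?(itvP x02).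
apply: quotient_cvg_is_derive (psi_quot x x02') _.
apply/nbhs_normP; exists (Num.min x (2 - x)); first by move: x02; rewrite /= lt_min subr_gt0 in_itv.
move=> y; rewrite /= lt_min => /andP[]; rewrite in_itv /=.
by have := ler_norm (x - y); have := ler_norm (y - x); rewrite distrC; lra.
Qed.

End RealDerivative.

Section TmapLipschitz.
Variable R : realType.
Variables (psi : R -> R) (M : R).
Hypotheses (M_ge0 : 0 <= M) (psi2 : psi 2 = 0)
  (psi_lip : {in `[0, 2] &, forall x y, `|psi x - psi y| <= M * `|x - y|}).
Implicit Types (a b v x y z : 'cV[R]_3).

Lemma Tmap_rotv x1 x2 v : x1 != 0 -> x2 != 0 ->
  Tmap psi x1 x2 v = psi (enorm (unitv x1 - unitv x2)) *: rotv (unitv x2) (unitv x1) v.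
Proof.
move=> x1_neq0 x2_neq0; rewrite /Tmap; case: ifPn => [sum_neq0|].
  by rewrite Rrot_rotv ?enorm_unitv // addrC.
rewrite negbK addr_eq0 => /eqP ->.
have -> : - unitv x2 - unitv x2 = (-2) *: unitv x2 by apply: col3_eq; rewrite !mxE; ring.
by rewrite enormZ enorm_unitv // normrN mulr1 ger0_norm // psi2 scale0r.
Qed.

Lemma enorm_unit_sub_in02 a b : enorm a = 1 -> enorm b = 1 -> enorm (b - a) \in `[0, 2].
Proof.
move=> a_unit b_unit; rewrite in_itv /= enorm_ge0.
by have := enormB_le b a; rewrite a_unit b_unit.
Qed.

Lemma normr_psi_dist_unit_le a b : enorm a = 1 -> enorm b = 1 ->
  `|psi (enorm (b - a))| <= M * enorm (a + b).
Proof.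
move=> a_unit b_unit; have d02 := enorm_unit_sub_in02 a_unit b_unit.
have two02 : (2 : R) \in `[0, 2] by rewrite in_itv /= ler0n lexx.
have := psi_lip d02 two02; rewrite psi2 subr0 => /le_trans; apply; rewrite ler_wpM2l //.
move: d02; rewrite in_itv /= => /andP[d_ge0 d_le2].
rewrite distrC ger0_norm ?subr_ge0 //.
have sum_sqr : enorm (a + b) ^+ 2 = 4 - enorm (b - a) ^+ 2.
  by rewrite sqr_enorm_add_unit // enorm_distC sqr_enorm_sub_unit //; ring.
rewrite -(ler_pXn2r (_ : 0 < 2)%N) ?nnegrE ?subr_ge0 ?enorm_ge0 // sum_sqr.
nra.
Qed.

Lemma psi_rotv_sub_le a b v a' b' v' (V : R) :
    enorm a = 1 -> enorm b = 1 -> enorm a' = 1 -> enorm b' = 1 ->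
    enorm v <= V -> enorm v' <= V ->
  enorm (psi (enorm (b - a)) *: rotv a b v - psi (enorm (b' - a')) *: rotv a' b' v') <=
  M * (10 * enorm (v - v') + 19 * V * (enorm (a - a') + enorm (b - b'))).
Proof.
move=> a_unit b_unit a'_unit b'_unit v_le v'_le.
have V_ge0 : 0 <= V := le_trans (enorm_ge0 v) v_le.
set p := psi (enorm (b - a)); set p' := psi (enorm (b' - a')).
set da := enorm (a - a'); set db := enorm (b - b'); set dv := enorm (v - v').
set du := enorm (rot_axis a b - rot_axis a' b').
have da_ge0 : 0 <= da := enorm_ge0 _.
have db_ge0 : 0 <= db := enorm_ge0 _.
have du_ge0 : 0 <= du := enorm_ge0 _.
have p_le := normr_psi_dist_unit_le a_unit b_unit.
have p_le2 : `|p| <= 2 * M.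
  apply: le_trans p_le _; rewrite mulrC ler_wpM2r //.
  by have := enormD a b; rewrite a_unit b_unit.
have pu_le : `|p| * du <= 2 * M * (da + db).
  apply: le_trans (ler_wpM2r du_ge0 p_le) _; rewrite -!mulrA [in X in _ <= X]mulrCA ler_wpM2l //.
  exact: enorm_rot_axis_sub_le.
have pp'_le : `|p - p'| <= M * (da + db).
  apply: le_trans (psi_lip (enorm_unit_sub_in02 a_unit b_unit) (enorm_unit_sub_in02 a'_unit b'_unit)) _.
  rewrite ler_wpM2l // [da + db]addrC; apply: le_trans (ler_dist_enorm _ _) _.
  have -> : b - a - (b' - a') = (b - b') - (a - a') by apply: col3_eq; rewrite !mxE; ring.
  exact: enormB_le.
have rotv_sub_le := enorm_rotv_sub_le a_unit b_unit a'_unit b'_unit v_le v'_le.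
have rotv'_le := enorm_rotv_le v' a'_unit b'_unit.
have -> : p *: rotv a b v - p' *: rotv a' b' v' =
    p *: (rotv a b v - rotv a' b' v') + (p - p') *: rotv a' b' v'.
  by rewrite scalerBr scalerBl addrA subrK.
apply: le_trans (enormD _ _) _; rewrite !enormZ.
have p_rotv_sub : `|p| * enorm (rotv a b v - rotv a' b' v') <=
    2 * M * (5 * dv + 3 * V * (da + db)) + 4 * V * (2 * M * (da + db)).
  apply: le_trans (ler_wpM2l (normr_ge0 p) rotv_sub_le) _.
  rewrite mulrDr [_ * (4 * V * _)]mulrCA; apply: lerD.
    by rewrite ler_wpM2r // addr_ge0 ?mulr_ge0 ?addr_ge0 ?enorm_ge0.
  by rewrite ler_wpM2l ?mulr_ge0.
have pp'_rotv : `|p - p'| * enorm (rotv a' b' v') <= M * (da + db) * (5 * V).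
  by rewrite ler_pM ?enorm_ge0 //; lra.
lra.
Qed.

Lemma Tmap_lipschitz_away_from0 (m V : R) y1 y2 w z1 z2 u : 0 < m ->
    m <= enorm y1 -> m <= enorm y2 -> m <= enorm z1 -> m <= enorm z2 ->
    enorm w <= V -> enorm u <= V ->
  enorm (Tmap psi y1 y2 w - Tmap psi z1 z2 u) <=
  M * (10 + 76 * V / m) * dist9 y1 y2 w z1 z2 u.
Proof.
move=> m_gt0 y1_ge y2_ge z1_ge z2_ge w_le u_le.
have V_ge0 : 0 <= V := le_trans (enorm_ge0 w) w_le.
have neq0 x : m <= enorm x -> x != 0.
  by move=> x_ge; rewrite -enorm_eq0 gt_eqF // (lt_le_trans m_gt0 x_ge).
have [d1_le d2_le dv_le] := enorm_le_dist9 y1 y2 w z1 z2 u.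
set D := dist9 y1 y2 w z1 z2 u in d1_le d2_le dv_le *.
have unitv_le y z : y != 0 -> m <= enorm z -> enorm (y - z) <= D ->
    enorm (unitv y - unitv z) <= 2 / m * D.
  move=> y_neq0 z_ge yz_le; apply: le_trans (unitv_lipschitz y_neq0 (neq0 _ z_ge)) _.
  have D_ge0 : 0 <= D := le_trans (enorm_ge0 _) yz_le.
  apply: (@le_trans _ _ (2 * D / enorm z)).
    by rewrite ler_wpM2r ?invr_ge0 ?enorm_ge0 // ler_wpM2l.
  by rewrite [2 / m * D]mulrAC ler_wpM2l ?mulr_ge0 // lef_pV2 ?posrE // (lt_le_trans m_gt0).
rewrite !Tmap_rotv ?neq0 //.
apply: le_trans (psi_rotv_sub_le (enorm_unitv (neq0 _ y2_ge)) (enorm_unitv (neq0 _ y1_ge))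
  (enorm_unitv (neq0 _ z2_ge)) (enorm_unitv (neq0 _ z1_ge)) w_le u_le) _.
rewrite -[X in _ <= X]mulrA ler_wpM2l //.
have := unitv_le _ _ (neq0 _ y1_ge) z1_ge d1_le.
have := unitv_le _ _ (neq0 _ y2_ge) z2_ge d2_le.
move=> /lerD/[apply]/(ler_wpM2l V_ge0); lra.
Qed.

End TmapLipschitz.

Unset Implicit Arguments.

Theorem lemma3p5 (R : realType) (psi dpsi : R -> R) :
  C1_on_02_with psi dpsi ->
  {in `[0, 2] &, forall x y : R, x <= y -> psi y <= psi x} ->
  {in `[0, 2], forall x : R, 0 <= psi x} ->
  psi 2 = 0 ->
  dpsi 2 < 0 ->
  locally_lipschitz_on_Q (Tmap psi).
Proof.
move=> psi_C1 _ _ psi2 _ x1 x2 v x1_neq0 x2_neq0.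
have [M M_ge0 psi_lip] := C1_on_02_lipschitz psi_C1.
pose m := Num.min (enorm x1) (enorm x2) / 2.
have m_gt0 : 0 < m by rewrite divr_gt0 // lt_min !enorm_gt0.
have [m_le1 m_le2] : m <= enorm x1 - m /\ m <= enorm x2 - m.
  have : Num.min (enorm x1) (enorm x2) <= enorm x1 by rewrite ge_min lexx.
  have : Num.min (enorm x1) (enorm x2) <= enorm x2 by rewrite ge_min lexx orbT.
  by rewrite /m; split; lra.
exists m; split => //; exists (M * (10 + 76 * (enorm v + m) / m)).
move=> y1 y2 w z1 z2 u _ _ _ _.
move=> /dist9_lt_bounds[y1_ge y2_ge w_le] /dist9_lt_bounds[z1_ge z2_ge u_le].
apply: (Tmap_lipschitz_away_from0 M_ge0 psi2 psi_lip) => //.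
- exact: le_trans m_le1 y1_ge.
- exact: le_trans m_le2 y2_ge.
- exact: le_trans m_le1 z1_ge.
- exact: le_trans m_le2 z2_ge.
Qed.
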